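(* Let $A\in\mathbb{R}^{n\times n}$ be a matrix diagonalizable over $\mathbb{C}$ whose eigenvalues are roots of one quadratic polynomial $X^2-pX-q$ with $p,q\in\mathbb{Z}$ and negative discriminant. Then there exists a generic cut-and-project scheme $\Lambda=(\mathcal{L}\subset\mathbb{R}^{n+2},\mathbb{R}^n)$ with self-similarity $A$, and $n+2$ is the minimal dimension of a lattice defining such a scheme.
   Context: A lattice $\mathcal{L}\subset\mathbb{R}^s$ is $\{L\mathbf{r}:\mathbf{r}\in\mathbb{Z}^s\}$ for a non-singular $L\in\mathbb{R}^{s\times s}$ (an associated matrix). For $1\le n<s$ the scheme $(\mathcal{L}\subset\mathbb{R}^s,\mathbb{R}^n)$ has projections $\pi_\parallel(\mathbf{x})=(x_1,\dots,x_n)^\top$, $\pi_\perp(\mathbf{x})=(x_{n+1},\dots,x_s)^\top$; it is generic if $\pi_\parallel|_{\mathcal{L}}$ and $\pi_\perp|_{\mathcal{L}}$ are injective and $\pi_\perp(\mathcal{L})$ is dense in $\mathbb{R}^{s-n}$. $A$ is a self-similarity of a generic scheme with associated matrix $L$ if $A\pi_\parallel(\mathcal{L})\subset\pi_\parallel(\mathcal{L})$ and there exist $C\in\mathbb{Z}^{s\times s}$, $B\in\mathbb{R}^{(s-n)\times(s-n)}$ with $\begin{pmatrix}A&O\\O&B\end{pmatrix}L=LC$. *)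

From HB Require Import structures.
From mathcomp Require Import all_boot all_order all_algebra.
From mathcomp Require Import reals complex.
Set Implicit Arguments. Unset Strict Implicit. Unset Printing Implicit Defensive.
Import Order.TTheory GRing.Theory Num.Theory.
Local Open Scope ring_scope.

Definition lat_pt (R : realType) (n m : nat) (L : 'M[R]_(n + m))
  (r : 'cV[int]_(n + m)) : 'cV[R]_(n + m) :=
  L *m map_mx (fun z : int => z%:~R) r.

Definition pi_par (R : realType) (n m : nat) (x : 'cV[R]_(n + m)) : 'cV[R]_n :=
  usubmx x.
Definition pi_perp (R : realType) (n m : nat) (x : 'cV[R]_(n + m)) : 'cV[R]_m :=
  dsubmx x.

Definition generic_scheme (R : realType) (n m : nat) (L : 'M[R]_(n + m)) : Prop :=
  [/\ (0 < n)%N && (0 < m)%N, L \in unitmx,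
      (forall r1 r2, pi_par (lat_pt L r1) = pi_par (lat_pt L r2) ->
                     lat_pt L r1 = lat_pt L r2),
      (forall r1 r2, pi_perp (lat_pt L r1) = pi_perp (lat_pt L r2) ->
                     lat_pt L r1 = lat_pt L r2) &
      (forall (y : 'cV[R]_m) (e : R), 0 < e ->
         exists r, forall i, `|pi_perp (lat_pt L r) i 0 - y i 0| < e)].

Definition self_similarity (R : realType) (n m : nat) (A : 'M[R]_n)
  (L : 'M[R]_(n + m)) : Prop :=
  (forall r, exists r', A *m pi_par (lat_pt L r) = pi_par (lat_pt L r')) /\
  exists (C : 'M[int]_(n + m)) (B : 'M[R]_m),
    block_mx A 0 0 B *m L = L *m map_mx (fun z : int => z%:~R) C.

Definition complexify (R : realType) (n : nat) (A : 'M[R]_n) : 'M[R[i]]_n :=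
  map_mx (fun x : R => (x%:C)%C) A.

From HB Require Import structures.
From mathcomp Require Import all_boot all_order all_algebra.
From mathcomp Require Import reals complex ring lra zify.
From mathcomp Require Import boolp classical_sets cardinality finmap.
From mathcomp Require Import ereal measure lebesgue_measure.
Import Order.TTheory GRing.Theory Num.Theory.
Set Implicit Arguments. Unset Strict Implicit. Unset Printing Implicit Defensive.
Local Open Scope ring_scope.

(* The eigenvalue condition forces A^2 = p A + q.

   Minimality: if the internal space were a line, the relation
   diag(A, b) L = L C would give L (C^2 - p C - q) = diag(0, b^2 - p b - q) L,
   where b^2 - p b - q <> 0 because b is real and the discriminant is negative.
   So C^2 - p C - q has rank one, the internal projection of L is a real multiple
   of an integer row vector, and it kills a nonzero lattice vector.

   Existence: A has no real eigenvalue, so vectors v, vA can be added pairwise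
   to a free family; thus n = 2K and in a basis (u_j, A u_j)_(j < K) the matrix
   A acts by the companion matrix of X^2 - pX - q, blockwise.  Take t
   transcendental and s = t^(K+1).  The lattice is spanned by u_j and A u_j
   with internal parts t^j e_1 and t^j e_2, and by s u_0 and s A u_0 with
   internal parts t^K e_1 and t^K e_2.  The companion structure passes to the
   internal space, transcendence of t makes the internal projection injective,
   irrationality of s the physical one, and density of Z + Z t^K in R gives
   density. *)

Local Notation intmx := (map_mx (fun z : int => z%:~R)).

Definition irrational (R : realType) (t : R) :=
  forall a b : int, a%:~R + b%:~R * t = 0 :> R -> b = 0.

Section IrrationalDensity.
Variables (R : realType) (t : R).
Hypothesis t_irr : irrational t.

Definition int_comb (x : R) := exists a b : int, x = a%:~R + b%:~R * t.

Lemma int_combB x y : int_comb x -> int_comb y -> int_comb (x - y).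
Proof.
move=> [a [b ->]] [c [d ->]]; exists (a - c), (b - d); rewrite !rmorphB /=; ring.
Qed.

Lemma int_combMz (k : int) x : int_comb x -> int_comb (k%:~R * x).
Proof. by move=> [a [b ->]]; exists (k * a), (k * b); rewrite !rmorphM /=; ring. Qed.

Lemma int_comb1 : int_comb 1.
Proof. by exists 1, 0; rewrite rmorph1 rmorph0 mul0r addr0. Qed.

Lemma int_comb_mulz_neq1 x (k : int) :
  int_comb x -> 0 < x -> x < 1 -> k%:~R * x != 1.
Proof.
move=> [a [b ->]] x_gt0 x_lt1; apply/eqP => kx1.
have /t_irr /eqP : (k * a - 1)%:~R + (k * b)%:~R * t = 0.
  rewrite rmorphB rmorph1 !rmorphM /= -{}[RHS](subrr 1) -[X in _ = X - _]kx1.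
  ring.
rewrite mulf_eq0 => /orP[/eqP k0 | /eqP b0].
  by move: kx1; rewrite k0 mul0r => /eqP; rewrite eq_sym oner_eq0.
move: x_gt0 x_lt1; rewrite b0 mul0r addr0 ltr0z -[1]/(1%:~R) ltr_int.
by rewrite gtz0_ge1 leNgt => /negP.
Qed.

Lemma int_comb_halve g : int_comb g -> 0 < g -> g < 1 ->
  exists2 g', int_comb g' & 0 < g' <= g / 2.
Proof.
move=> Gg g_gt0 g_lt1.
pose k := Num.floor g^-1; pose h := 1 - k%:~R * g.
have Gh : int_comb h by apply: int_combB; [exact: int_comb1 | exact: int_combMz].
have h_ge0 : 0 <= h.
  have := floor_le g^-1; rewrite -(ler_pM2r g_gt0) mulVf ?gt_eqF //.
  by rewrite /h; lra.
have h_ltg : h < g.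
  have := floorD1_gt g^-1.
  rewrite -(ltr_pM2r g_gt0) mulVf ?gt_eqF // rmorphD /= mulrDl mul1r.
  by rewrite /h; lra.
have h_gt0 : 0 < h.
  by rewrite lt_neqAle h_ge0 andbT eq_sym subr_eq0 eq_sym int_comb_mulz_neq1.
have [h_le|h_gt] := lerP h (g / 2); first by exists h; rewrite ?h_gt0.
by exists (g - h); [exact: int_combB | apply/andP; split; lra].
Qed.

Lemma int_comb_small (N : nat) : exists2 g, int_comb g & 0 < g /\ g * N.+1%:R < 1.
Proof.
elim: N => [|N [g Gg [g_gt0 gN]]].
  pose g := t - (Num.floor t)%:~R.
  have Gg : int_comb g.
    by exists (- Num.floor t), 1; rewrite /g rmorphN rmorph1 /=; ring.
  have g_lt1 : g < 1.
    by have := floorD1_gt t; rewrite /g rmorphD /= rmorph1; lra.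
  have g_ge0 : 0 <= g by rewrite /g subr_ge0 floor_le.
  have g_neq0 : g != 0.
    apply/eqP; rewrite /g => g0; suff : (1 : int) = 0 by [].
    by apply: (t_irr (a := - Num.floor t)); rewrite rmorphN rmorph1 /=; lra.
  by exists g => //; rewrite mulr1 lt_neqAle eq_sym g_neq0 g_ge0.
have g_lt1 : g < 1.
  have : 1 <= N.+1%:R :> R by rewrite ler1n.
  nra.
have [g' Gg' /andP[g'_gt0 g'_le]] := int_comb_halve Gg g_gt0 g_lt1.
exists g' => //; split => //.
have : 0 <= N%:R :> R by [].
by move: gN; rewrite -[N.+2]addn1 -[N.+1]addn1 !natrD; nra.
Qed.

Lemma int_comb_dense (y e : R) : 0 < e -> exists a b : int, `|a%:~R + b%:~R * t - y| < e.
Proof.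
move=> e_gt0.
pose N := `|Num.floor e^-1|%N.
have eN : e^-1 < N.+1%:R.
  have := floorD1_gt e^-1; rewrite rmorphD /= rmorph1.
  have : (Num.floor e^-1)%:~R <= N%:R :> R by rewrite natr_absz ler_int ler_norm.
  by rewrite -addn1 natrD; lra.
have [g Gg [g_gt0 gN]] := int_comb_small N.
have g_lte : g < e.
  have : e * e^-1 = 1 by rewrite mulfV ?gt_eqF.
  have : 0 < e^-1 by rewrite invr_gt0.
  nra.
pose k := Num.floor (y / g).
have [a [b abE]] := int_combMz k Gg.
exists a, b; rewrite -abE.
have := floor_le (y / g).
rewrite -(ler_pM2r g_gt0) mulrVK ?unitfE ?gt_eqF //.
have := floorD1_gt (y / g).
rewrite -(ltr_pM2r g_gt0) mulrVK ?unitfE ?gt_eqF // rmorphD /= rmorph1 mulrDl mul1r.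
by move=> *; rewrite ler0_norm; lra.
Qed.

End IrrationalDensity.

Definition transcendental (R : realType) (t : R) :=
  forall P : {poly int}, (map_poly (fun z : int => z%:~R : R) P).[t] = 0 -> P = 0.

Section ExistsTranscendental.
Local Open Scope classical_set_scope.

Lemma countable_root (R : realType) (Q : {poly R}) :
  Q != 0 -> countable [set t : R | root Q t].
Proof.
move=> Q_neq0; apply: finite_set_countable; apply: contrapT.
move=> /(infinite_set_fset (size Q)) [B BQ szB].
have := max_poly_roots Q_neq0 (_ : all (root Q) B) (fset_uniq B).
by rewrite ltnNge szB => /(_ (introT allP BQ)).
Qed.

(* The algebraic numbers form a countable, hence Lebesgue-null, set. *)
Lemma exists_transcendental (R : realType) : exists t : R, transcendental t.
Proof.
pose S := \bigcup_(P in [set P : {poly int} | P != 0])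
            [set t : R | root (map_poly (fun z : int => z%:~R) P) t].
have cS : countable S.
  apply: bigcup_countable; first exact: countableP.
  move=> P /= P_neq0; apply: countable_root.
  by rewrite map_poly_eq0_id0 // intr_eq0 lead_coef_eq0.
have S0 := countable_lebesgue_measure0 cS.
have [t /= St] : exists t, ~ S t.
  apply/existsNP => SR; suff : lebesgue_measure [set` `[(0 : R), 1]%R] = 0%E.
    rewrite lebesgue_measure_itv /= lte_fin ltr01 oppr0 adde0.
    by move=> -[] /eqP; rewrite oner_eq0.
  apply: (subset_measure0 _ _ _ S0) => [||x _]; first exact: measurable_itv.
    by apply: countable_measurable cS => x; exact: measurable_set1.
  exact: SR.
exists t => P Pt; apply: contrapT => P_neq0; apply: St.
by exists P => //=; apply/eqP.
Qed.

End ExistsTranscendental.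

Section TranscendentalPowers.
Variables (R : realType) (t : R).
Hypothesis t_tr : transcendental t.

Lemma transcendental_sum_eq0 K (f : nat -> int) :
  \sum_(j < K) (f j)%:~R * t ^+ j = 0 -> forall j, (j < K)%N -> f j = 0.
Proof.
move=> sum0 j ltjK.
suff /polyP/(_ j) : \poly_(j < K) f j = 0 by rewrite coef_poly ltjK coef0.
apply: t_tr; rewrite -{}sum0 -(horner_poly K (fun i => (f i)%:~R)); congr horner.
by apply/polyP => i; rewrite coef_map !coef_poly /=; case: ifP.
Qed.

Lemma transcendental_irrational_pow K : (0 < K)%N -> irrational (t ^+ K).
Proof.
move=> K_gt0 a b abt0.
have /polyP/(_ K) : a%:P + b *: 'X^K = 0.
  apply: t_tr; rewrite rmorphD /= map_polyC map_polyZ map_polyXn /=.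
  by rewrite hornerD hornerC hornerZ hornerXn.
by rewrite coefD coefC coefZ coefXn eqxx mulr1 coef0 (gtn_eqF K_gt0) add0r.
Qed.

Lemma transcendental_expS_neq K : t ^+ K != t ^+ K.+1.
Proof.
apply/eqP => tK; have /polyP/(_ K.+1) : 'X^(K.+1) - 'X^K = 0 :> {poly int}.
  apply: t_tr; rewrite rmorphB /= !map_polyXn hornerD hornerN !hornerXn tK.
  exact: subrr.
rewrite coefB !coefXn eqxx (gtn_eqF (ltnSn K)) subr0 polyseq0 nth_nil.
by move=> /eqP; rewrite oner_eq0.
Qed.

End TranscendentalPowers.

Lemma quadratic_eq_of_diagonalizable (R : realType) n (A : 'M[R]_n) (p q : int) :
  diagonalizable (complexify A) ->
  (forall z : R[i], eigenvalue (complexify A) z -> z ^+ 2 - p%:~R * z - q%:~R = 0) ->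
  A *m A = p%:~R *: A + (q%:~R)%:M.
Proof.
move=> /diagonalizablePeigen [rs _ rsP] ev_root.
set Ac := complexify A.
pose G := Ac *m Ac - (p%:~R : R[i]) *: Ac - (q%:~R : R[i])%:M.
have eigen_ker r : (eigenspace Ac r <= kermx G)%MS.
  apply/row_subP => i; set v := row i _.
  have /eigenspaceP vAc : (v <= eigenspace Ac r)%MS by exact: row_sub.
  have vG : v *m G = (r ^+ 2 - p%:~R * r - q%:~R) *: v.
    rewrite /G !mulmxBr mulmxA vAc -scalemxAl vAc -!scalemxAr vAc mul_mx_scalar.
    by rewrite !scalerA !scalerBl expr2.
  rewrite sub_kermx vG; have [->|v_neq0] := eqVneq v 0; first by rewrite scaler0.
  by rewrite ev_root ?scale0r //; apply/eigenvalueP; exists v.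
have G0 : G = 0.
  apply/eqP; rewrite -(mul1mx G) -sub_kermx -rsP.
  apply: (big_ind (fun X => (X <= kermx G)%MS)) => [|X Y XG YG|r _].
  - exact: sub0mx.
  - by rewrite addsmx_sub XG.
  - exact: eigen_ker.
apply/eqP; rewrite -subr_eq0 opprD addrA; apply/eqP.
apply: (@map_mx_inj _ _ (real_complex R)); rewrite map_mx0 -G0 /G /Ac /complexify.
by rewrite map_mxB map_mxD map_mxM map_mxN map_mxZ map_scalar_mx !rmorph_int.
Qed.

Lemma intr_neg_disc (R : numDomainType) (p q : int) :
  p ^+ 2 + 4 * q < 0 -> (p%:~R : R) ^+ 2 + 4 * q%:~R < 0.
Proof. by rewrite -(ltr_int R) rmorphD rmorphXn rmorphM. Qed.

Lemma neg_disc_quad_form_eq0 (R : realFieldType) (p q c d : R) :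
  p ^+ 2 + 4 * q < 0 -> c ^+ 2 + c * d * p - d ^+ 2 * q = 0 -> c = 0 /\ d = 0.
Proof.
move=> disc form0.
have d0 : d = 0.
  apply/eqP; rewrite -sqrf_eq0 eq_le sqr_ge0 andbT.
  have : 0 <= (2 * c + p * d) ^+ 2 by exact: sqr_ge0.
  nra.
move: form0; rewrite d0 mulr0 mul0r expr0n /= mul0r !subr0 addr0.
by move=> /eqP; rewrite sqrf_eq0 => /eqP.
Qed.

Lemma lat_ptB (R : realType) n m (L : 'M[R]_(n + m)) r1 r2 :
  lat_pt L (r1 - r2) = lat_pt L r1 - lat_pt L r2.
Proof. by rewrite /lat_pt map_mxB mulmxBr. Qed.

Lemma lat_pt_inj (R : realType) n m (L : 'M[R]_(n + m)) :
  L \in unitmx -> injective (lat_pt L).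
Proof.
move=> L_unit r1 r2 /(congr1 (mulmx (invmx L))); rewrite !mulKmx //.
by move/matrixP => r12; apply/matrixP => i j; have := r12 i j; rewrite !mxE => /intr_inj.
Qed.

Lemma lat_proj_inj (R : realType) n m (L : 'M[R]_(n + m)) k
    (f : 'cV[R]_(n + m) -> 'cV[R]_k) :
  {morph f : x y / x - y} -> (forall r, f (lat_pt L r) = 0 -> r = 0) ->
  forall r1 r2, f (lat_pt L r1) = f (lat_pt L r2) -> lat_pt L r1 = lat_pt L r2.
Proof.
move=> fB f_ker r1 r2 f12; suff -> : r1 = r2 by [].
by apply/eqP; rewrite -subr_eq0; apply/eqP/f_ker; rewrite lat_ptB fB f12 subrr.
Qed.

Lemma intertwine_quadratic (R : comPzRingType) n m (A : 'M[R]_n) (B : 'M[R]_m)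
    (L C : 'M[R]_(n + m)) (p q : R) :
  A *m A = p *: A + q%:M -> block_mx A 0 0 B *m L = L *m C ->
  L *m (C *m C - p *: C - q%:M) = col_mx 0 ((B *m B - p *: B - q%:M) *m dsubmx L).
Proof.
move=> AA DL; set D := block_mx A 0 0 B.
have DD : D *m D - p *: D - q%:M = block_mx 0 0 0 (B *m B - p *: B - q%:M).
  rewrite /D mulmx_block !mulmx0 !mul0mx !addr0 !add0r AA scale_block_mx.
  rewrite (scalar_mx_block n m) !opp_block_mx !add_block_mx !scaler0 !oppr0 !addr0.
  by rewrite addrAC addrK subrr.
rewrite !mulmxBr mulmxA -DL -mulmxA -DL mulmxA -scalemxAr -DL scalemxAl.
rewrite scalar_mxC -!mulmxBl DD -{1}[L]vsubmxK mul_block_col.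
by rewrite !mul0mx !addr0 add0r.
Qed.

Lemma exists_int_orthogonal N (z : 'rV[int]_N) :
  (1 < N)%N -> exists2 r : 'cV[int]_N, r != 0 & z *m r = 0.
Proof.
move=> N_gt1; pose i0 : 'I_N := Ordinal (ltnW N_gt1); pose i1 : 'I_N := Ordinal N_gt1.
have z_delta i : z *m delta_mx i 0 = (z 0 i)%:M.
  by apply/matrixP => a b; rewrite !ord1 -colE !mxE eqxx mulr1n.
have [z0|z0] := eqVneq (z 0 i0) 0.
  exists (delta_mx i0 0); last by rewrite z_delta z0 raddf0.
  by apply/negP => /eqP /matrixP /(_ i0 0); rewrite !mxE !eqxx.
exists (z 0 i1 *: delta_mx i0 0 - z 0 i0 *: delta_mx i1 0).
  apply/negP => /eqP /matrixP /(_ i1 0); rewrite !mxE !eqxx /= mulr1 mulr0n mulr0 sub0r.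
  by move/eqP; rewrite oppr_eq0 (negPf z0).
by rewrite mulmxBr -!scalemxAr !z_delta !scale_scalar_mx mulrC subrr.
Qed.

(* [F] has rank one, so its nonzero rows are multiples of [dsubmx L]. *)
Lemma dsubmx_int_multiple (R : realType) n (L : 'M[R]_(n + 1)) (F : 'M[int]_(n + 1))
    (b : R) :
  L \in unitmx -> b != 0 -> L *m intmx F = col_mx 0 (b *: dsubmx L) ->
  exists (c : R) (z : 'rV[int]_(n + 1)), dsubmx L = c *: intmx z.
Proof.
move=> L_unit b_neq0 LF; pose g := rsubmx (invmx L) *m b%:M.
have FE : intmx F = g *m dsubmx L.
  rewrite -(mulKmx L_unit (intmx F)) LF -{1}[invmx L]hsubmxK mul_row_col mulmx0.
  by rewrite add0r -mulmxA mul_scalar_mx.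
case: (pickP (fun i => g i 0 != 0)) => [i gi_neq0 | g0].
  exists (g i 0)^-1, (row i F); rewrite map_row FE row_mul.
  have -> : row i g = (g i 0)%:M.
    by apply/matrixP => a c; rewrite !ord1 !mxE eqxx mulr1n.
  by rewrite mul_scalar_mx scalerA mulVf ?scale1r.
have {g0} g0 : g = 0.
  by apply/matrixP => i j; rewrite ord1 [RHS]mxE; apply/eqP/negbFE; exact: g0.
exists 0, 0; rewrite scale0r; apply/eqP.
move: LF; rewrite FE g0 mul0mx mulmx0 => /esym/eqP.
by rewrite col_mx_eq0 eqxx scaler_eq0 (negPf b_neq0).
Qed.

Lemma dsubmx_mul (R : pzRingType) m1 m2 n k (L : 'M[R]_(m1 + m2, n)) (X : 'M[R]_(n, k)) :
  dsubmx (L *m X) = dsubmx L *m X.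
Proof. by rewrite -{1}[L]vsubmxK mul_col_mx col_mxKd. Qed.

Lemma self_similarity_codim_ge2 (R : realType) n m (A : 'M[R]_n) (L : 'M[R]_(n + m))
    (p q : int) :
  p ^+ 2 + 4 * q < 0 -> A *m A = p%:~R *: A + (q%:~R)%:M ->
  generic_scheme L -> self_similarity A L -> (2 <= m)%N.
Proof.
move=> disc AA [/andP[n_gt0 m_gt0] L_unit _ perp_inj _] [_ [C [B DL]]].
rewrite leqNgt; apply/negP => m_lt2; have {m_gt0 m_lt2} m1 : m = 1%N by lia.
subst m; pose b := B 0 0; pose beta := b ^+ 2 - p%:~R * b - q%:~R.
have beta_neq0 : beta != 0.
  apply/eqP => beta0; suff [_ /eqP] : b = 0 /\ -1 = 0 :> R by rewrite oppr_eq0 oner_eq0.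
  apply: (neg_disc_quad_form_eq0 (p := p%:~R) (q := q%:~R)).
    exact: intr_neg_disc.
  by rewrite -beta0 /beta; ring.
have LF : L *m intmx (C *m C - p *: C - q%:M) = col_mx 0 (beta *: dsubmx L).
  rewrite !map_mxB map_mxM map_mxZ map_scalar_mx /= (intertwine_quadratic AA DL).
  rewrite {1 2 3}[B]mx11_scalar -scalar_mxM !scale_scalar_mx -!raddfB /=.
  by rewrite mul_scalar_mx /beta expr2 mulrC.
have [c [z u_cz]] := dsubmx_int_multiple L_unit beta_neq0 LF.
have n1_gt1 : (1 < n + 1)%N by rewrite addn1 ltnS.
have [r /negP r_neq0 zr0] := exists_int_orthogonal z n1_gt1.
apply: r_neq0; apply/eqP/(lat_pt_inj L_unit)/perp_inj.
rewrite /pi_perp /lat_pt !dsubmx_mul u_cz -scalemxAl -map_mxM zr0.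
by rewrite !map_mx0 !mulmx0 scaler0.
Qed.

Section CyclicPairs.
Variables (R : realFieldType) (n : nat) (A : 'M[R]_n) (p q : R).
Hypothesis disc : p ^+ 2 + 4 * q < 0.
Hypothesis AA : A *m A = p *: A + q%:M.

Definition cyclic_pairs j (U : 'M[R]_(j, n)) := col_mx U (U *m A).

Lemma cyclic_pairs_stable j (U : 'M_(j, n)) (x : 'rV_n) :
  (x <= cyclic_pairs U)%MS -> (x *m A <= cyclic_pairs U)%MS.
Proof.
have /andP[UW UAW] : (U <= cyclic_pairs U)%MS && (U *m A <= cyclic_pairs U)%MS.
  by rewrite -col_mx_sub submx_refl.
move=> /submxP[y ->]; rewrite -mulmxA; apply: mulmx_sub.
rewrite [X in (X <= _)%MS]mul_col_mx -mulmxA AA mulmxDr mul_mx_scalar -scalemxAr.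
by rewrite col_mx_sub UAW addmx_sub ?scalemx_sub.
Qed.

Lemma cyclic_pairs_indep j (U : 'M_(j, n)) (v : 'rV_n) c d :
  ~~ (v <= cyclic_pairs U)%MS -> ((c *: v + d *: (v *m A))%R <= cyclic_pairs U)%MS ->
  c = 0 /\ d = 0.
Proof.
set x := c *: v + d *: (v *m A) => vW xW.
apply: (neg_disc_quad_form_eq0 disc); apply: contraNeq vW => g_neq0.
have vE : v = (c ^+ 2 + c * d * p - d ^+ 2 * q)^-1 *:
              ((c + d * p) *: x - d *: (x *m A)).
  apply/eqP; rewrite -[X in X == _](scalerK g_neq0); apply/eqP; congr (_ *: _).
  rewrite /x mulmxDl -!scalemxAl -mulmxA AA mulmxDr mul_mx_scalar -scalemxAr.
  by apply/rowP => k; rewrite !mxE; ring.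
have xAW := cyclic_pairs_stable xW.
rewrite vE; apply/scalemx_sub/addmx_sub; first exact: scalemx_sub _ xW.
by rewrite eqmx_opp; exact: scalemx_sub _ xAW.
Qed.

Lemma cyclic_pairs_extend j (U : 'M_(j, n)) (v : 'rV_n) :
  row_free (cyclic_pairs U) -> ~~ (v <= cyclic_pairs U)%MS ->
  row_free (cyclic_pairs (col_mx v U)).
Proof.
move=> U_free vW; apply: inj_row_free => z.
rewrite /cyclic_pairs (mul_col_mx v U A).
rewrite -[z]hsubmxK -[lsubmx z]hsubmxK -[rsubmx z]hsubmxK.
set c := lsubmx (lsubmx z); set z1 := rsubmx (lsubmx z).
set d := lsubmx (rsubmx z); set z2 := rsubmx (rsubmx z).
rewrite !mul_row_col [c]mx11_scalar [d]mx11_scalar !mul_scalar_mx addrACA.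
set y := row_mx z1 z2; have -> : z1 *m U + z2 *m (U *m A) = y *m cyclic_pairs U.
  by rewrite mul_row_col.
move=> /eqP; rewrite addr_eq0 => /eqP xE.
have [c0 d0] : c 0 0 = 0 /\ d 0 0 = 0.
  by apply: (cyclic_pairs_indep vW); rewrite xE -mulNmx submxMl.
move: xE; rewrite c0 d0 !scale0r addr0 => /esym/eqP; rewrite oppr_eq0 => /eqP.
rewrite -(mul0mx _ (cyclic_pairs U)) => /(row_free_inj U_free) /eqP.
by rewrite row_mx_eq0 => /andP[/eqP-> /eqP->]; rewrite !raddf0 !row_mx0.
Qed.

Lemma cyclic_pairs_grow j (U : 'M_(j, n)) : row_free (cyclic_pairs U) -> (j + j < n)%N ->
  exists U' : 'M_(1 + j, n), row_free (cyclic_pairs U').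
Proof.
move=> U_free j_lt; have : ~~ row_full (cyclic_pairs U).
  by move/eqP: U_free; rewrite /row_full => ->; rewrite neq_ltn j_lt.
rewrite -sub1mx => /row_subPn[i vW].
by exists (col_mx (row i 1%:M) U); exact: cyclic_pairs_extend.
Qed.

Lemma cyclic_pairs_basis :
  exists k (U : 'M_(k, n)), (k + k)%N = n /\ row_free (cyclic_pairs U).
Proof.
have [U U_free] : exists U : 'M_(n %/ 2, n), row_free (cyclic_pairs U).
  have : (n %/ 2 + n %/ 2 <= n)%N by lia.
  elim: (n %/ 2)%N => [|j IHj] j_le.
    by exists 0; rewrite /row_free -leqn0 rank_leq_row.
  have [|U U_free] := IHj; first by lia.
  have j_lt : (j + j < n)%N by lia.
  have [U' U'_free] := cyclic_pairs_grow U_free j_lt.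
  by exists U'.
exists (n %/ 2)%N, U; split => //.
have [n_lt|] := ltnP (n %/ 2 + n %/ 2) n; last by lia.
have [U'] := cyclic_pairs_grow U_free n_lt; rewrite -row_leq_rank.
by have := rank_leq_col (cyclic_pairs U'); lia.
Qed.

End CyclicPairs.

Lemma self_similarity_of_intertwine (R : realType) n m (A : 'M[R]_n) (B : 'M[R]_m)
    (L : 'M[R]_(n + m)) (C : 'M[int]_(n + m)) :
  block_mx A 0 0 B *m L = L *m intmx C -> self_similarity A L.
Proof.
move=> DL; split; last by exists C, B.
move=> r; exists (C *m r).
rewrite /pi_par /lat_pt map_mxM mulmxA -DL -mulmxA.
by rewrite -[in RHS](vsubmxK (L *m _)) mul_block_col col_mxKu mul0mx addr0.
Qed.

Definition companion_mx (R : pzRingType) K (p q : R) : 'M[R]_(K + K) :=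
  block_mx 0 q%:M 1%:M p%:M.

Lemma map_companion_mx (R : pzRingType) K (p q : int) :
  intmx (companion_mx K p q) = companion_mx K (p%:~R : R) q%:~R.
Proof. by rewrite map_block_mx map_mx0 !map_scalar_mx /= rmorph1. Qed.

Section Construction.
Variables (R : realType) (k : nat) (p q : int).
Local Notation K := k.+1.
Variables (A : 'M[R]_(K + K)) (U : 'M[R]_(K, K + K)) (t s : R).
Hypothesis AA : A *m A = p%:~R *: A + (q%:~R)%:M.
Hypothesis U_free : row_free (cyclic_pairs A^T U).
Hypotheses (t_tr : transcendental t) (s_irr : irrational s) (tK_neq_s : t ^+ K != s).

Definition base_mx : 'M[R]_(K + K) := row_mx U^T (A *m U^T).
Definition e0 : 'cV[R]_K := delta_mx 0 0.
Definition e0_blocks : 'M[R]_(K + K, 1 + 1) := block_mx e0 0 0 e0.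
Definition powers : 'rV[R]_K := \row_(j < K) t ^+ j.
Definition powers_blocks : 'M[R]_(1 + 1, K + K) := block_mx powers 0 0 powers.

Definition lattice_mx : 'M[R]_(K + K + (1 + 1)) :=
  block_mx base_mx (s *: (base_mx *m e0_blocks)) powers_blocks (t ^+ K)%:M.

Definition lattice_int_mx : 'M[int]_(K + K + (1 + 1)) :=
  block_mx (companion_mx K p q) 0 0 (companion_mx 1 p q).

Lemma base_mx_unit : base_mx \in unitmx.
Proof.
have -> : base_mx = (cyclic_pairs A^T U)^T by rewrite tr_col_mx trmx_mul trmxK.
by rewrite unitmx_tr -row_free_unit.
Qed.

Lemma mul_base_mx : A *m base_mx = base_mx *m companion_mx K p%:~R q%:~R.
Proof.
rewrite /base_mx /companion_mx mul_mx_row mul_row_block mulmx0 add0r mulmx1.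
by rewrite mulmxA AA mulmxDl !mul_mx_scalar -scalemxAl mul_scalar_mx addrC.
Qed.

Lemma companion_e0_blocks :
  companion_mx K p%:~R q%:~R *m e0_blocks = e0_blocks *m companion_mx 1 p%:~R q%:~R.
Proof.
rewrite /e0_blocks /companion_mx !mulmx_block !mulmx0 !mul0mx !addr0 !add0r.
by rewrite !mul1mx !mulmx1 !mul_scalar_mx !mul_mx_scalar.
Qed.

Lemma lattice_mx_intertwine :
  block_mx A 0 0 (companion_mx 1 p%:~R q%:~R) *m lattice_mx =
  lattice_mx *m intmx lattice_int_mx.
Proof.
rewrite map_block_mx !map_mx0 !map_companion_mx /lattice_mx !mulmx_block.
rewrite !mulmx0 !mul0mx !addr0 !add0r mul_base_mx -scalemxAr mulmxA mul_base_mx.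
rewrite -mulmxA companion_e0_blocks -scalemxAl mulmxA.
by rewrite !mul_scalar_mx !mul_mx_scalar !scale1r.
Qed.

Lemma powers_e0 : powers *m e0 = 1.
Proof.
apply/matrixP => i j; rewrite !ord1 !mxE big_ord_recl big1 ?addr0.
  by rewrite !mxE !eqxx expr0 mulr1.
by move=> l _; rewrite !mxE /= mulr0.
Qed.

Lemma lattice_mx_unit : lattice_mx \in unitmx.
Proof.
have -> : lattice_mx = block_mx base_mx 0 powers_blocks ((t ^+ K - s)%:M) *m
                       block_mx 1%:M (s *: e0_blocks) 0 1%:M.
  rewrite mulmx_block !mulmx0 !mul0mx !addr0 !mulmx1 -!scalemxAr.
  have -> : powers_blocks *m e0_blocks = 1%:M.
    rewrite mulmx_block !mulmx0 !mul0mx !addr0 !add0r powers_e0.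
    by rewrite [RHS](scalar_mx_block 1 1).
  by rewrite /lattice_mx scalemx1 -raddfD /= addrC subrK.
rewrite unitmx_mul !unitmxE det_lblock det_ublock !det1 mulr1 det_scalar unitrM.
by rewrite -!unitmxE base_mx_unit unitr1 unitfE expf_neq0 // subr_eq0.
Qed.

Lemma lat_pt_lattice_mx (a b : 'cV[int]_K) (c e : 'cV[int]_1) :
  lat_pt lattice_mx (col_mx (col_mx a b) (col_mx c e)) =
  col_mx (base_mx *m col_mx (intmx a + s *: (e0 *m intmx c))
                            (intmx b + s *: (e0 *m intmx e)))
         (col_mx (powers *m intmx a + t ^+ K *: intmx c)
                 (powers *m intmx b + t ^+ K *: intmx e)).
Proof.
rewrite /lat_pt !map_col_mx /lattice_mx mul_block_col /powers_blocks /e0_blocks.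
rewrite !mul_block_col !mul0mx !addr0 !add0r -scalemxAl -mulmxA mul_block_col.
rewrite !mul0mx addr0 add0r mul_scalar_mx scalemxAr -mulmxDr.
by rewrite !scale_col_mx !add_col_mx.
Qed.

Lemma par_component_eq0 (a : 'cV[int]_K) (c : 'cV[int]_1) :
  intmx a + s *: (e0 *m intmx c) = 0 -> a = 0 /\ c = 0.
Proof.
move=> ac0; have c0 : c = 0.
  apply/matrixP => i j; rewrite !ord1 [RHS]mxE; apply: (s_irr (a := a 0 0)).
  by move/matrixP: ac0 => /(_ 0 0); rewrite !mxE big_ord1 !mxE eqxx /=; lra.
split => //; apply/matrixP => i j; move/matrixP: ac0 => /(_ i j).
by rewrite c0 map_mx0 mulmx0 scaler0 addr0 !mxE => /eqP; rewrite intr_eq0 => /eqP.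
Qed.

Lemma perp_component_eq0 (a : 'cV[int]_K) (c : 'cV[int]_1) :
  powers *m intmx a + t ^+ K *: intmx c = 0 -> a = 0 /\ c = 0.
Proof.
move=> /matrixP/(_ 0 0); rewrite !mxE => ac0.
pose f j := if (j < K)%N then a (inord j) 0 else c 0 0.
have f0 := @transcendental_sum_eq0 _ _ t_tr K.+1 f.
have {ac0} /f0 {}f0 : \sum_(j < K.+1) (f j)%:~R * t ^+ j = 0.
  rewrite big_ord_recr /= {2}/f ltnn mulrC; apply: etrans ac0; congr (_ + _).
  by apply: eq_bigr => j _; rewrite /f ltn_ord inord_val !mxE mulrC.
split; apply/matrixP => i j; rewrite !ord1 [RHS]mxE.
  by have := f0 i (ltnW (ltn_ord i)); rewrite /f ltn_ord inord_val.
by have := f0 K (ltnSn K); rewrite /f ltnn.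
Qed.

Lemma lattice_mx_par_inj r1 r2 :
  pi_par (lat_pt lattice_mx r1) = pi_par (lat_pt lattice_mx r2) ->
  lat_pt lattice_mx r1 = lat_pt lattice_mx r2.
Proof.
apply: lat_proj_inj => [x y|r]; first by rewrite /pi_par linearB.
rewrite -[r]vsubmxK -[usubmx r]vsubmxK -[dsubmx r]vsubmxK.
rewrite lat_pt_lattice_mx /pi_par col_mxKu.
move=> /(congr1 (mulmx (invmx base_mx))); rewrite mulKmx ?base_mx_unit // mulmx0.
move=> /eqP; rewrite col_mx_eq0 => /andP[/eqP/par_component_eq0[-> ->]].
by move=> /eqP/par_component_eq0[-> ->]; rewrite !col_mx0.
Qed.

Lemma lattice_mx_perp_inj r1 r2 :
  pi_perp (lat_pt lattice_mx r1) = pi_perp (lat_pt lattice_mx r2) ->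
  lat_pt lattice_mx r1 = lat_pt lattice_mx r2.
Proof.
apply: lat_proj_inj => [x y|r]; first by rewrite /pi_perp linearB.
rewrite -[r]vsubmxK -[usubmx r]vsubmxK -[dsubmx r]vsubmxK.
rewrite lat_pt_lattice_mx /pi_perp col_mxKd.
move=> /eqP; rewrite col_mx_eq0 => /andP[/eqP/perp_component_eq0[-> ->]].
by move=> /eqP/perp_component_eq0[-> ->]; rewrite !col_mx0.
Qed.

Lemma lattice_mx_perp_dense (y : 'cV[R]_(1 + 1)) e : 0 < e ->
  exists r, forall i, `|pi_perp (lat_pt lattice_mx r) i 0 - y i 0| < e.
Proof.
move=> e_gt0; have tK_irr := transcendental_irrational_pow t_tr (ltn0Sn k).
have [a0 [c0 approx0]] := int_comb_dense tK_irr (y 0 0) e_gt0.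
have [a1 [c1 approx1]] := int_comb_dense tK_irr (y 1 0) e_gt0.
pose d : 'cV[int]_K := delta_mx 0 0.
exists (col_mx (col_mx (a0 *: d) (a1 *: d)) (col_mx c0%:M c1%:M)).
have int_d (z : int) : intmx (z *: d) = z%:~R *: e0.
  by apply/matrixP => i j; rewrite !mxE; case: (_ && _); rewrite ?mulr1 ?mulr0.
rewrite lat_pt_lattice_mx /pi_perp col_mxKd !int_d !map_scalar_mx.
rewrite -!scalemxAr powers_e0 => i; rewrite mxE; case: splitP => j; rewrite ord1.
  move=> i0; have -> : i = 0 by exact: val_inj.
  by rewrite !mxE /= mulr1 mulr1n mulrC.
move=> i1; have -> : i = 1 by exact: val_inj.
by rewrite !mxE /= mulr1 mulr1n mulrC.
Qed.

Lemma lattice_mx_generic : generic_scheme lattice_mx.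
Proof.
split => //; first exact: lattice_mx_unit.
- exact: lattice_mx_par_inj.
- exact: lattice_mx_perp_inj.
- exact: lattice_mx_perp_dense.
Qed.

End Construction.

Theorem proposition7 (R : realType) (n : nat) (A : 'M[R]_n) (p q : int) :
  (0 < n)%N ->
  diagonalizable (complexify A) ->
  (forall z : R[i], eigenvalue (complexify A) z ->
     z ^+ 2 - p%:~R * z - q%:~R = 0) ->
  p ^+ 2 + 4 * q < 0 ->
  (exists L : 'M[R]_(n + 2), generic_scheme L /\ self_similarity A L) /\
  (forall (m : nat) (L : 'M[R]_(n + m)),
     generic_scheme L -> self_similarity A L -> (n + 2 <= n + m)%N).
Proof.
move=> n_gt0 A_diag A_ev disc; have AA := quadratic_eq_of_diagonalizable A_diag A_ev.
split; last first.
  move=> m L L_gen A_ss.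
  by rewrite leq_add2l (self_similarity_codim_ge2 disc AA L_gen A_ss).
have AtAt : A^T *m A^T = p%:~R *: A^T + (q%:~R)%:M.
  by rewrite -trmx_mul AA linearD linearZ /= tr_scalar_mx.
have [K [U [n_eq U_free]]] := cyclic_pairs_basis (intr_neg_disc R disc) AtAt.
have [k K_eq] : exists k, K = k.+1.
  by case: K {U U_free} n_eq => [|k] n_eq; [lia | exists k].
subst K n; have [t t_tr] := exists_transcendental R.
exists (lattice_mx A U t (t ^+ k.+2)); split.
  apply: (lattice_mx_generic U_free t_tr); last exact: transcendental_expS_neq.
  exact: (transcendental_irrational_pow t_tr (ltn0Sn _)).
exact: self_similarity_of_intertwine (lattice_mx_intertwine _ _ _ AA).
Qed.
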